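(* Let $n\geq 1$ be an integer and let $L_1,L_2$ be two distinct regular fibres of the $(n,1)$-Seifert fibration $\mathcal{S}_{n,1}\colon S^3\to\mathbb{C}P(1)$, $(z_1,z_2)\mapsto[z_2/z_1^{n}]$. Then there exists a smooth non-singular vector field $X_n$ on $S^3$ which is positively collinear to $H_{n,1}$ at every point of $L_1$, negatively collinear to $H_{n,1}$ at every point of $L_2$, and not collinear to $H_{n,1}$ at any point of $S^3\setminus(L_1\cup L_2)$.
   Context: $S^3=\{(z_1,z_2)\in\mathbb{C}^2: |z_1|^2+|z_2|^2=1\}$. For relatively prime integers $p\neq0$, $q>0$, the $(p,q)$-Seifert fibration is $\mathcal{S}_{p,q}(z_1,z_2)=[z_2^q/z_1^p]\in\mathbb{C}P(1)\cong S^2$; its fibres are circles, the two singular fibres being $\{z_1=0\}$ and $\{z_2=0\}$ and the others (regular fibres) being $(p,q)$-torus knots on the tori $|z_1|=a,|z_2|=b$. $H_{p,q}$ is the unit vector field tangent to the fibres of $\mathcal{S}_{p,q}$, oriented by the circle action $(z_1,z_2)\mapsto(e^{iqt}z_1,e^{ipt}z_2)$ (so $H_{1,1}(z_1,z_2)=(iz_1,iz_2)$). *)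

From Stdlib Require Import Reals.
From Coquelicot Require Import Coquelicot.
Open Scope R_scope.

(* A point of C^2 = R^4 is a pair (z1, z2) of Coquelicot complex numbers,
   z1 = (x1, y1), z2 = (x2, y2). *)
Definition pt := (C * C)%type.

Definition coord (i : nat) (p : pt) : R :=
  match i with
  | O => fst (fst p)
  | 1%nat => snd (fst p)
  | 2%nat => fst (snd p)
  | _ => snd (snd p)
  end.

Definition shift (i : nat) (t : R) (p : pt) : pt :=
  match i with
  | O => ((fst (fst p) + t, snd (fst p)), snd p)
  | 1%nat => ((fst (fst p), snd (fst p) + t), snd p)
  | 2%nat => (fst p, (fst (snd p) + t, snd (snd p)))
  | _ => (fst p, (fst (snd p), snd (snd p) + t))
  end.

Fixpoint Ck (k : nat) (f : pt -> R) : Prop :=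
  match k with
  | O => forall p, continuous f p
  | S k' => (forall p, continuous f p) /\
      forall i, (i < 4)%nat -> exists g : pt -> R,
        (forall p, is_derive (fun t => f (shift i t p)) 0 (g p)) /\ Ck k' g
  end.

Definition smooth (f : pt -> R) : Prop := forall k, Ck k f.

Definition S3 (p : pt) : Prop :=
  coord 0 p ^ 2 + coord 1 p ^ 2 + coord 2 p ^ 2 + coord 3 p ^ 2 = 1.

(* A smooth vector field on S^3: a smooth map R^4 -> R^4 (equivalently, up
   to extension, a smooth map on S^3) which is tangent to S^3 along S^3. *)
Definition smooth_field (X : pt -> pt) : Prop :=
  forall i, (i < 4)%nat -> smooth (fun p => coord i (X p)).

Definition dot (u v : pt) : R :=
  coord 0 u * coord 0 v + coord 1 u * coord 1 v
  + coord 2 u * coord 2 v + coord 3 u * coord 3 v.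

Definition tangent_to_S3 (X : pt -> pt) : Prop :=
  forall p, S3 p -> dot p (X p) = 0.

Definition zero_pt : pt := ((0, 0), (0, 0)).

Definition rscale (l : R) (v : pt) : pt :=
  ((l * fst (fst v), l * snd (fst v)), (l * fst (snd v), l * snd (snd v))).

(* Generator of the circle action (z1,z2) |-> (e^{iqt} z1, e^{ipt} z2)
   with (p,q) = (n,1):  (i z1, i n z2). *)
Definition gen_n1 (n : nat) (p : pt) : pt :=
  ((- snd (fst p), fst (fst p)),
   (- INR n * snd (snd p), INR n * fst (snd p))).

(* H_{n,1}: the unit vector field tangent to the fibres of S_{n,1},
   oriented by the circle action. *)
Definition H_n1 (n : nat) (p : pt) : pt :=
  rscale (/ sqrt (dot (gen_n1 n p) (gen_n1 n p))) (gen_n1 n p).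

Fixpoint Cpow (z : C) (n : nat) : C :=
  match n with O => RtoC 1 | S m => Cmult z (Cpow z m) end.

(* Its singular fibres {z1 = 0} and {z2 = 0} lie over [1:0] and [0:1];
   the regular fibres are the fibres over [w : 1] with w <> 0, i.e.
   { (z1,z2) in S^3 | z2 = w z1^n }. *)
Definition fibre_over (n : nat) (w : C) (p : pt) : Prop :=
  S3 p /\ snd p = Cmult w (Cpow (fst p) n).

Definition regular_fibre (n : nat) (L : pt -> Prop) : Prop :=
  exists w : C, w <> RtoC 0 /\ forall p, L p <-> fibre_over n w p.

From Stdlib Require Import Reals Lra Psatz.
From Coquelicot Require Import Coquelicot.
Open Scope R_scope.

(* Write q_k = z2 - w_k z1^n, so that L_k = S^3 /\ {q_k = 0}, and take
     X = (|q2|^2 - |q1|^2) G + (q1 q2) j(p),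
   where G = (i z1, i n z2) generates the circle action and j(p) = (-conj z2, conj z1).
   Both G and j(p) are tangent to S^3; j(p) is orthogonal to i p whereas <i p, G> > 0,
   and |j(p)| = 1.  Hence X is collinear with G exactly where q1 q2 = 0, that is on
   L1 \/ L2, and there X = |q2|^2 G on L1 and X = -|q1|^2 G on L2; these coefficients
   do not vanish because distinct fibres are disjoint.  X is polynomial, hence smooth. *)

Inductive polynomial : (pt -> R) -> Prop :=
| polynomial_const c : polynomial (fun _ => c)
| polynomial_coord i : polynomial (coord i)
| polynomial_plus f g : polynomial f -> polynomial g -> polynomial (fun p => f p + g p)
| polynomial_mult f g : polynomial f -> polynomial g -> polynomial (fun p => f p * g p)
| polynomial_ext f g : (forall p, f p = g p) -> polynomial f -> polynomial g.

Lemma continuous_coord i p : continuous (coord i) p.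
Proof.
  destruct i as [|[|[|i]]]; simpl.
  - apply (continuous_comp fst fst); [apply continuous_fst | apply continuous_fst].
  - apply (continuous_comp fst snd); [apply continuous_fst | apply continuous_snd].
  - apply (continuous_comp snd fst); [apply continuous_snd | apply continuous_fst].
  - apply (continuous_comp snd snd); [apply continuous_snd | apply continuous_snd].
Qed.

Lemma polynomial_continuous f p : polynomial f -> continuous f p.
Proof.
  intros Hf; induction Hf.
  - apply continuous_const.
  - apply continuous_coord.
  - apply (continuous_plus f g); assumption.
  - apply (continuous_mult f g); assumption.
  - eapply continuous_ext; eassumption.
Qed.

Lemma coord_shift_affine i j : exists c, forall p t, coord j (shift i t p) = coord j p + c * t.
Proof.
  destruct i as [|[|[|i]]]; destruct j as [|[|[|j]]];
    solve [ exists 0; intros [[x1 y1] [x2 y2]] t; simpl; ring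
          | exists 1; intros [[x1 y1] [x2 y2]] t; simpl; ring ].
Qed.

Lemma shift_0 i p : shift i 0 p = p.
Proof.
  destruct p as [[x1 y1] [x2 y2]]; destruct i as [|[|[|i]]]; simpl; now rewrite Rplus_0_r.
Qed.

Lemma polynomial_partial_derivative f i : polynomial f ->
  exists g, polynomial g /\ forall p, is_derive (fun t => f (shift i t p)) 0 (g p).
Proof.
  intros Hf; induction Hf as [c | j | f g _ [f' [Hf' Df]] _ [g' [Hg' Dg]]
                          | f g Hf [f' [Hf' Df]] Hg [g' [Hg' Dg]] | f g Efg _ [f' [Hf' Df]]].
  - exists (fun _ => 0); split; [apply polynomial_const | intros p; apply (is_derive_const c 0)].
  - destruct (coord_shift_affine i j) as [c Hc].
    exists (fun _ => c); split; [apply polynomial_const | intros p].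
    eapply is_derive_ext; [intros t; symmetry; apply Hc |].
    auto_derive; [exact I | ring].
  - exists (fun p => f' p + g' p); split; [now apply polynomial_plus | intros p].
    now apply (is_derive_plus (fun t => f (shift i t p)) (fun t => g (shift i t p))).
  - exists (fun p => f' p * g p + f p * g' p); split.
    + apply polynomial_plus; apply polynomial_mult; assumption.
    + intros p.
      pose proof (is_derive_mult (fun t => f (shift i t p)) (fun t => g (shift i t p))
                    0 _ _ (Df p) (Dg p) ltac:(intros; apply Rmult_comm)) as D.
      simpl in D; rewrite shift_0 in D; exact D.
  - exists f'; split; [assumption | intros p].
    eapply is_derive_ext; [intros t; apply Efg | apply Df].
Qed.

Lemma polynomial_Ck k f : polynomial f -> Ck k f.
Proof.
  revert f; induction k as [|k IHk]; intros f Hf; simpl.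
  - intros p; now apply polynomial_continuous.
  - split; [intros p; now apply polynomial_continuous |].
    intros i _; destruct (polynomial_partial_derivative f i Hf) as [g [Hg Dg]].
    exists g; split; [exact Dg | now apply IHk].
Qed.

Lemma polynomial_smooth f : polynomial f -> smooth f.
Proof. intros Hf k; now apply polynomial_Ck. Qed.

Lemma polynomial_opp f : polynomial f -> polynomial (fun p => - f p).
Proof.
  intros Hf; apply (polynomial_ext (fun p => -1 * f p)); [intros p; ring |].
  apply polynomial_mult; [apply polynomial_const | exact Hf].
Qed.

Lemma polynomial_minus f g : polynomial f -> polynomial g -> polynomial (fun p => f p - g p).
Proof. intros Hf Hg; apply polynomial_plus; [exact Hf | now apply polynomial_opp]. Qed.

Definition Cpolynomial (F : pt -> C) : Prop :=
  polynomial (fun p => fst (F p)) /\ polynomial (fun p => snd (F p)).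

Lemma Cpolynomial_const c : Cpolynomial (fun _ => c).
Proof. split; apply polynomial_const. Qed.

Lemma Cpolynomial_fst : Cpolynomial fst.
Proof. split; [apply (polynomial_coord 0) | apply (polynomial_coord 1)]. Qed.

Lemma Cpolynomial_snd : Cpolynomial snd.
Proof. split; [apply (polynomial_coord 2) | apply (polynomial_coord 3)]. Qed.

Lemma Cpolynomial_plus F G :
  Cpolynomial F -> Cpolynomial G -> Cpolynomial (fun p => F p + G p)%C.
Proof. intros [F1 F2] [G1 G2]; split; now apply polynomial_plus. Qed.

Lemma Cpolynomial_opp F : Cpolynomial F -> Cpolynomial (fun p => - F p)%C.
Proof. intros [F1 F2]; split; now apply polynomial_opp. Qed.

Lemma Cpolynomial_minus F G :
  Cpolynomial F -> Cpolynomial G -> Cpolynomial (fun p => F p - G p)%C.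
Proof. intros HF HG; apply Cpolynomial_plus; [exact HF | now apply Cpolynomial_opp]. Qed.

Lemma Cpolynomial_mult F G :
  Cpolynomial F -> Cpolynomial G -> Cpolynomial (fun p => F p * G p)%C.
Proof.
  intros [F1 F2] [G1 G2]; split; simpl.
  - apply polynomial_minus; now apply polynomial_mult.
  - apply polynomial_plus; now apply polynomial_mult.
Qed.

Lemma Cpolynomial_conj F : Cpolynomial F -> Cpolynomial (fun p => Cconj (F p)).
Proof. intros [F1 F2]; split; [exact F1 | now apply polynomial_opp]. Qed.

Lemma Cpolynomial_pow F k : Cpolynomial F -> Cpolynomial (fun p => Cpow (F p) k).
Proof.
  intros HF; induction k as [|k IHk]; simpl.
  - apply Cpolynomial_const.
  - now apply Cpolynomial_mult.
Qed.

Lemma polynomial_Cmod2 F : Cpolynomial F -> polynomial (fun p => Cmod (F p) ^ 2).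
Proof.
  intros [F1 F2].
  apply (polynomial_ext (fun p => fst (F p) * fst (F p) + snd (F p) * snd (F p))).
  - intros p; rewrite Cmod2_alt; unfold Re, Im; ring.
  - apply polynomial_plus; now apply polynomial_mult.
Qed.

Definition padd (u v : pt) : pt := (fst u + fst v, snd u + snd v)%C.

Definition Cscale (c : C) (v : pt) : pt := (c * fst v, c * snd v)%C.

Definition quaternion_j (p : pt) : pt := (- Cconj (snd p), Cconj (fst p))%C.

Definition polynomial_field (F : pt -> pt) : Prop :=
  Cpolynomial (fun p => fst (F p)) /\ Cpolynomial (fun p => snd (F p)).

Lemma polynomial_field_smooth F : polynomial_field F -> smooth_field F.
Proof.
  intros [[F0 F1] [F2 F3]] [|[|[|i]]] _; now apply polynomial_smooth.
Qed.

Lemma polynomial_field_padd F G :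
  polynomial_field F -> polynomial_field G -> polynomial_field (fun p => padd (F p) (G p)).
Proof. intros [F1 F2] [G1 G2]; split; now apply Cpolynomial_plus. Qed.

Lemma polynomial_field_rscale l F :
  polynomial l -> polynomial_field F -> polynomial_field (fun p => rscale (l p) (F p)).
Proof. intros Hl [[F1 F2] [F3 F4]]; split; split; now apply polynomial_mult. Qed.

Lemma polynomial_field_Cscale c F :
  Cpolynomial c -> polynomial_field F -> polynomial_field (fun p => Cscale (c p) (F p)).
Proof. intros Hc [F1 F2]; split; now apply Cpolynomial_mult. Qed.

Lemma polynomial_field_gen_n1 n : polynomial_field (gen_n1 n).
Proof.
  split; split; simpl; try apply polynomial_mult;
    try apply polynomial_opp; try apply polynomial_const;
    first [apply (polynomial_coord 0) | apply (polynomial_coord 1)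
          | apply (polynomial_coord 2) | apply (polynomial_coord 3)].
Qed.

Lemma polynomial_field_quaternion_j : polynomial_field quaternion_j.
Proof.
  split; [apply Cpolynomial_opp |]; apply Cpolynomial_conj;
    [apply Cpolynomial_snd | apply Cpolynomial_fst].
Qed.

Lemma dot_padd_r u v w : dot u (padd v w) = dot u v + dot u w.
Proof.
  destruct u as [[? ?] [? ?]], v as [[? ?] [? ?]], w as [[? ?] [? ?]]; unfold dot; simpl; ring.
Qed.

Lemma dot_rscale_r u l v : dot u (rscale l v) = l * dot u v.
Proof. destruct u as [[? ?] [? ?]], v as [[? ?] [? ?]]; unfold dot; simpl; ring. Qed.

Lemma rscale_rscale l m v : rscale l (rscale m v) = rscale (l * m) v.
Proof. destruct v as [[? ?] [? ?]]; unfold rscale; simpl; f_equal; f_equal; ring. Qed.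

Lemma rscale_0 v : rscale 0 v = zero_pt.
Proof. unfold rscale, zero_pt; now rewrite !Rmult_0_l. Qed.

Lemma padd_Cscale_0 u v : padd u (Cscale 0 v) = u.
Proof.
  destruct u as [[? ?] [? ?]], v as [[? ?] [? ?]]; unfold padd, Cscale; simpl.
  f_equal; f_equal; ring.
Qed.

Lemma dot_gen_n1 n p : dot p (gen_n1 n p) = 0.
Proof. destruct p as [[? ?] [? ?]]; unfold dot; simpl; ring. Qed.

Lemma dot_Cscale_quaternion_j c p : dot p (Cscale c (quaternion_j p)) = 0.
Proof. destruct p as [[? ?] [? ?]], c; unfold dot; simpl; ring. Qed.

Lemma dot_hopf_Cscale_quaternion_j c p : dot (gen_n1 1 p) (Cscale c (quaternion_j p)) = 0.
Proof. destruct p as [[? ?] [? ?]], c; unfold dot; simpl; ring. Qed.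

Lemma dot_hopf_gen_n1_pos n p : (1 <= n)%nat -> S3 p -> 0 < dot (gen_n1 1 p) (gen_n1 n p).
Proof.
  intros Hn Hp; assert (1 <= INR n) by now apply (le_INR 1).
  destruct p as [[? ?] [? ?]]; unfold dot, S3 in *; simpl in *; nra.
Qed.

Lemma dot_gen_n1_self_pos n p : (1 <= n)%nat -> S3 p -> 0 < dot (gen_n1 n p) (gen_n1 n p).
Proof.
  intros Hn Hp; assert (1 <= INR n) by now apply (le_INR 1).
  destruct p as [[? ?] [? ?]]; unfold dot, S3 in *; simpl in *; nra.
Qed.

Lemma dot_Cscale_quaternion_j_self c p :
  S3 p -> dot (Cscale c (quaternion_j p)) (Cscale c (quaternion_j p)) = Cmod c ^ 2.
Proof.
  intros Hp; rewrite Cmod2_alt; unfold Re, Im.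
  destruct p as [[x1 y1] [x2 y2]], c as [a b]; unfold S3 in Hp; cbn [coord fst snd] in Hp.
  unfold dot; simpl.
  transitivity ((a ^ 2 + b ^ 2) * (x1 ^ 2 + y1 ^ 2 + x2 ^ 2 + y2 ^ 2)); [ring | rewrite Hp; ring].
Qed.

Lemma gen_n1_collinear n p a c m : (1 <= n)%nat -> S3 p ->
  padd (rscale a (gen_n1 n p)) (Cscale c (quaternion_j p)) = rscale m (gen_n1 n p) ->
  c = 0%C /\ a = m.
Proof.
  intros Hn Hp E.
  assert (Ham : a = m).
  { pose proof (dot_hopf_gen_n1_pos n p Hn Hp) as Hpos.
    apply (f_equal (dot (gen_n1 1 p))) in E.
    rewrite dot_padd_r, !dot_rscale_r, dot_hopf_Cscale_quaternion_j in E.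
    apply (Rmult_eq_reg_r (dot (gen_n1 1 p) (gen_n1 n p))); lra. }
  subst m; split; [| reflexivity].
  set (K := Cscale c (quaternion_j p)) in E.
  assert (HK : dot K K = 0).
  { apply (f_equal (dot K)) in E; rewrite dot_padd_r, !dot_rscale_r in E; lra. }
  unfold K in HK; rewrite dot_Cscale_quaternion_j_self in HK by exact Hp.
  apply Cmod_eq_0; nra.
Qed.

Lemma rscale_H_n1 n p l :
  rscale l (H_n1 n p) = rscale (l / sqrt (dot (gen_n1 n p) (gen_n1 n p))) (gen_n1 n p).
Proof. apply rscale_rscale. Qed.

Lemma Cmult_integral a b : (a * b = 0 -> a = 0 \/ b = 0)%C.
Proof.
  intros E; apply (f_equal Cmod) in E; rewrite Cmod_mult, Cmod_0 in E.
  destruct (Rmult_integral _ _ E); [left | right]; now apply Cmod_eq_0.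
Qed.

Lemma Cpow_eq_0 z k : Cpow z k = 0%C -> z = 0%C.
Proof.
  induction k as [|k IHk]; simpl; intros E.
  - now destruct C1_nz.
  - now destruct (Cmult_integral _ _ E); [| apply IHk].
Qed.

Lemma S3_neq_zero_pt p : S3 p -> p <> zero_pt.
Proof. intros Hp ->; unfold S3 in Hp; simpl in Hp; lra. Qed.

Definition fibre_defect (n : nat) (w : C) (p : pt) : C := (snd p - w * Cpow (fst p) n)%C.

Lemma Cpolynomial_fibre_defect n w : Cpolynomial (fibre_defect n w).
Proof.
  apply Cpolynomial_minus; [apply Cpolynomial_snd |].
  apply Cpolynomial_mult; [apply Cpolynomial_const | apply Cpolynomial_pow, Cpolynomial_fst].
Qed.

Lemma fibre_over_iff n w p : fibre_over n w p <-> S3 p /\ fibre_defect n w p = 0%C.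
Proof.
  unfold fibre_over, fibre_defect; now rewrite Ceq_minus.
Qed.

Lemma fibre_defects_not_both_0 n w1 w2 p : w1 <> w2 -> S3 p ->
  fibre_defect n w1 p = 0%C -> fibre_defect n w2 p <> 0%C.
Proof.
  unfold fibre_defect; intros Hw Hp E1 E2.
  assert (E : ((w2 - w1) * Cpow (fst p) n = 0)%C).
  { replace ((w2 - w1) * Cpow (fst p) n)%C
      with ((snd p - w1 * Cpow (fst p) n) - (snd p - w2 * Cpow (fst p) n))%C by ring.
    rewrite E1, E2; ring. }
  destruct (Cmult_integral _ _ E) as [Ew | Ez].
  - now apply (Cminus_eq_contra w2 w1); [auto |].
  - apply (S3_neq_zero_pt p Hp); destruct p as [z1 z2]; simpl in *.
    replace z2 with (z2 - w1 * Cpow z1 n + w1 * Cpow z1 n)%C by ring.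
    now rewrite E1, Ez, Cmult_0_r, Cplus_0_l, (Cpow_eq_0 _ _ Ez).
Qed.

Section Separating_field.

Variables (n : nat) (w1 w2 : C).

Definition fibre_weight (p : pt) : R :=
  Cmod (fibre_defect n w2 p) ^ 2 - Cmod (fibre_defect n w1 p) ^ 2.

Definition fibre_twist (p : pt) : C := (fibre_defect n w1 p * fibre_defect n w2 p)%C.

Definition separating_field (p : pt) : pt :=
  padd (rscale (fibre_weight p) (gen_n1 n p)) (Cscale (fibre_twist p) (quaternion_j p)).

Lemma separating_field_smooth : smooth_field separating_field.
Proof.
  apply polynomial_field_smooth, polynomial_field_padd.
  - apply polynomial_field_rscale; [| apply polynomial_field_gen_n1].
    apply polynomial_minus; apply polynomial_Cmod2, Cpolynomial_fibre_defect.
  - apply polynomial_field_Cscale; [| apply polynomial_field_quaternion_j].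
    apply Cpolynomial_mult; apply Cpolynomial_fibre_defect.
Qed.

Lemma separating_field_tangent : tangent_to_S3 separating_field.
Proof.
  intros p _; unfold separating_field.
  rewrite dot_padd_r, dot_rscale_r, dot_gen_n1, dot_Cscale_quaternion_j; ring.
Qed.

Hypotheses (Hn : (1 <= n)%nat) (Hw : w1 <> w2).

Lemma separating_field_collinear p l : S3 p ->
  separating_field p = rscale l (H_n1 n p) ->
  fibre_twist p = 0%C /\ fibre_weight p = l / sqrt (dot (gen_n1 n p) (gen_n1 n p)).
Proof. intros Hp; rewrite rscale_H_n1; now apply gen_n1_collinear. Qed.

Lemma separating_field_on_fibres p : S3 p -> fibre_twist p = 0%C ->
  separating_field p =
  rscale (fibre_weight p * sqrt (dot (gen_n1 n p) (gen_n1 n p))) (H_n1 n p).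
Proof.
  intros Hp Ht; unfold separating_field; rewrite Ht, padd_Cscale_0, rscale_H_n1.
  f_equal; field; apply Rgt_not_eq, sqrt_lt_R0, dot_gen_n1_self_pos; assumption.
Qed.

Lemma fibre_weight_pos p : fibre_over n w1 p -> 0 < fibre_weight p.
Proof.
  intros [Hp E1]%fibre_over_iff; unfold fibre_weight; rewrite E1, Cmod_0.
  pose proof (fibre_defects_not_both_0 n w1 w2 p Hw Hp E1) as E2.
  apply Cmod_gt_0 in E2; nra.
Qed.

Lemma fibre_weight_neg p : fibre_over n w2 p -> fibre_weight p < 0.
Proof.
  intros [Hp E2]%fibre_over_iff; unfold fibre_weight; rewrite E2, Cmod_0.
  pose proof (fibre_defects_not_both_0 n w2 w1 p (not_eq_sym Hw) Hp E2) as E1.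
  apply Cmod_gt_0 in E1; nra.
Qed.

Lemma fibre_twist_eq_0 p :
  S3 p -> fibre_twist p = 0%C <-> fibre_over n w1 p \/ fibre_over n w2 p.
Proof.
  intros Hp; rewrite !fibre_over_iff; unfold fibre_twist; split.
  - intros Ht; destruct (Cmult_integral _ _ Ht); [left | right]; split; assumption.
  - intros [[_ E] | [_ E]]; rewrite E; ring.
Qed.

Lemma separating_field_neq_0 p : S3 p -> separating_field p <> zero_pt.
Proof.
  intros Hp E; rewrite <- (rscale_0 (H_n1 n p)) in E.
  destruct (separating_field_collinear p 0 Hp E) as [Ht Hweight].
  unfold Rdiv in Hweight; rewrite Rmult_0_l in Hweight.
  destruct (proj1 (fibre_twist_eq_0 p Hp) Ht) as [F | F];
    [apply fibre_weight_pos in F | apply fibre_weight_neg in F]; lra.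
Qed.

End Separating_field.

Theorem lemma7 (n : nat) (L1 L2 : pt -> Prop) :
  (1 <= n)%nat ->
  regular_fibre n L1 -> regular_fibre n L2 ->
  (exists p, ~ (L1 p <-> L2 p)) ->
  exists X : pt -> pt,
    smooth_field X /\ tangent_to_S3 X /\
    (forall p, S3 p -> X p <> zero_pt) /\
    (forall p, L1 p -> exists l : R, 0 < l /\ X p = rscale l (H_n1 n p)) /\
    (forall p, L2 p -> exists l : R, l < 0 /\ X p = rscale l (H_n1 n p)) /\
    (forall p, S3 p -> ~ L1 p -> ~ L2 p ->
       ~ (exists l : R, X p = rscale l (H_n1 n p))).
Proof.
  intros Hn [w1 [_ HL1]] [w2 [_ HL2]] [p0 Hp0].
  assert (Hw : w1 <> w2) by (intros <-; apply Hp0; rewrite HL1, HL2; reflexivity).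
  exists (separating_field n w1 w2); repeat split.
  - apply separating_field_smooth.
  - apply separating_field_tangent.
  - now apply separating_field_neq_0.
  - intros p F%HL1; pose proof (proj1 F) as HS.
    eexists; split; [| apply separating_field_on_fibres, fibre_twist_eq_0; auto].
    apply Rmult_lt_0_compat; [now apply fibre_weight_pos |].
    now apply sqrt_lt_R0, dot_gen_n1_self_pos.
  - intros p F%HL2; pose proof (proj1 F) as HS.
    eexists; split; [| apply separating_field_on_fibres, fibre_twist_eq_0; auto].
    apply Rmult_neg_pos; [now apply fibre_weight_neg |].
    now apply sqrt_lt_R0, dot_gen_n1_self_pos.
  - intros p Hp N1 N2 [l E].
    destruct (separating_field_collinear n w1 w2 Hn p l Hp E) as [Ht _].
    apply fibre_twist_eq_0 in Ht as [F | F]; [apply N1, HL1 | apply N2, HL2 | ]; assumption.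
Qed.
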